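(* Every ternary cubic form whose zero locus in $\mathbb{P}^2$ is a cuspidal cubic curve has an apolar star configuration $\mathbb{X}(4)$.
   Context: Let $S=\mathbb{C}[x_0,x_1,x_2]$ and $T=\mathbb{C}[y_0,y_1,y_2]$, where $T$ acts on $S$ by differentiation, $y_j=\partial/\partial x_j$. For a form $F\in S$, $F^\perp=\{\partial\in T:\partial F=0\}$. A finite set of points $\mathbb{X}\subset\mathbb{P}^2=\mathbb{P}(S_1)$ with defining ideal $I(\mathbb{X})\subseteq T$ is apolar to $F$ if $I(\mathbb{X})\subseteq F^\perp$. A star configuration $\mathbb{X}(4)\subset\mathbb{P}^2$: take $4$ linear forms $l_1,\dots,l_4\in T_1$ such that any $3$ of them are linearly independent; $\mathbb{X}(4)$ is the set of $6$ pairwise intersection points of the lines $\{l_i=0\}$. *)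

From HB Require Import structures.
From mathcomp Require Import all_boot all_order all_algebra.
From mathcomp Require Import reals.
From mathcomp Require Import complex.
From mathcomp Require Import mpoly.
Set Implicit Arguments. Unset Strict Implicit. Unset Printing Implicit Defensive.
Import Order.TTheory GRing.Theory Num.Theory.
Local Open Scope ring_scope.

Notation CC R := (complex R).

Section Defs.
Variable C : fieldType.

(* Action of T on S by differentiation: g(d/dx) F, where the monomial
   y^m acts as the iterated partial derivative d^m/dx^m. *)
Definition apolar_act (g F : {mpoly C[3]}) : {mpoly C[3]} :=
  \sum_(m <- msupp g) g@_m *: F^`M[m].

Definition linform (a : 'rV[C]_3) : {mpoly C[3]} := \sum_(k < 3) a 0 k *: 'X_k.

(* Irreducibility of a polynomial: non-constant, and any factorization has a
   constant factor (msize p <= 1 means p is constant). *)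
Definition mirreducible (F : {mpoly C[3]}) : Prop :=
  (1 < msize F)%N /\
  forall G H : {mpoly C[3]}, F = G * H -> (msize G <= 1)%N \/ (msize H <= 1)%N.

(* v (a nonzero vector, i.e. a point of P^2) is a singular point of V(F). *)
Definition singular_point (F : {mpoly C[3]}) (v : 'I_3 -> C) : Prop :=
  (exists k, v k != 0) /\ F.@[v] = 0 /\ forall i : 'I_3, (F^`M(i)).@[v] = 0.

Definition hessian (F : {mpoly C[3]}) (v : 'I_3 -> C) : 'M[C]_3 :=
  \matrix_(i < 3, j < 3) ((F^`M(i))^`M(j)).@[v].

(* A cusp: a double point whose tangent cone (the quadric given by the
   Hessian at the point) is a single line counted twice, i.e. the Hessian
   quadratic form has rank 1. *)
Definition cusp (F : {mpoly C[3]}) (v : 'I_3 -> C) : Prop :=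
  singular_point F v /\ \rank (hessian F v) = 1%N.

Definition cuspidal_cubic (F : {mpoly C[3]}) : Prop :=
  F \is 3.-homog /\ mirreducible F /\ exists v, cusp F v.

Definition star_lines (L : 'M[C]_(4, 3)) : Prop :=
  forall i j k : 'I_4, i != j -> j != k -> i != k ->
    free [:: row i L; row j L; row k L].

(* v lies on (the affine cone over) the star configuration X(4): it is in
   the intersection of two distinct lines l_i = l_j = 0. *)
Definition star_point (L : 'M[C]_(4, 3)) (v : 'I_3 -> C) : Prop :=
  exists i j : 'I_4, i != j /\
    (linform (row i L)).@[v] = 0 /\ (linform (row j L)).@[v] = 0.

Definition in_star_ideal (L : 'M[C]_(4, 3)) (g : {mpoly C[3]}) : Prop :=
  forall v, star_point L v -> g.@[v] = 0.

Definition in_perp (F g : {mpoly C[3]}) : Prop := apolar_act g F = 0.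

Definition apolar_star (F : {mpoly C[3]}) (L : 'M[C]_(4, 3)) : Prop :=
  star_lines L /\ forall g, in_star_ideal L g -> in_perp F g.

End Defs.

(* The Hessian of F at the cusp v is a symmetric matrix of rank one, b a a^T.
   Extending a to coordinates (y0, y1 = a, y2) dual to a basis (w0, w1, v) and
   expanding F along v gives F = f(y0, y1) + h y2 y1^2 with f a binary cubic and
   h = b/2 != 0.  Irreducibility forces the y0^3-coefficient of f to be nonzero,
   and completing the cube yields the normal form F = k P^3 + l^2 m for a basis
   (P, l, m) of linear forms.  For the dual basis (e0, e1, e2), the four lines
   e0, e1, e1 - e2, e0 + e1 + e2 form a star configuration among whose six points
   are P, m, l + m and l - m.  A form vanishing on X(4) vanishes on these points,
   hence annihilates their cubes; since 6 l^2 m = (l + m)^3 - (l - m)^3 - 2 m^3,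
   it annihilates F. *)

From mathcomp Require Import all_boot all_order all_algebra.
From mathcomp Require Import reals complex mpoly.
From mathcomp Require Import ring.
Set Implicit Arguments. Unset Strict Implicit. Unset Printing Implicit Defensive.
Import GRing.Theory Num.Theory.
Local Open Scope ring_scope.

Definition i0 : 'I_3 := @Ordinal 3 0 isT.
Definition i1 : 'I_3 := @Ordinal 3 1 isT.
Definition i2 : 'I_3 := @Ordinal 3 2 isT.

Lemma ord3P (k : 'I_3) : k = i0 \/ k = i1 \/ k = i2.
Proof.
case: k => [[|[|[|k]]] lt_k3] //.
- by left; apply/val_inj.
- by right; left; apply/val_inj.
- by right; right; apply/val_inj.
Qed.

Definition j0 : 'I_4 := @Ordinal 4 0 isT.
Definition j1 : 'I_4 := @Ordinal 4 1 isT.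
Definition j2 : 'I_4 := @Ordinal 4 2 isT.
Definition j3 : 'I_4 := @Ordinal 4 3 isT.

Lemma ord4P (x : 'I_4) : [\/ x = j0, x = j1, x = j2 | x = j3].
Proof.
case: x => [[|[|[|[|x]]]] lt_x4] //.
- by apply: Or41; apply/val_inj.
- by apply: Or42; apply/val_inj.
- by apply: Or43; apply/val_inj.
- by apply: Or44; apply/val_inj.
Qed.

Lemma sum_ord3 (V : nmodType) (f : 'I_3 -> V) : \sum_(k < 3) f k = f i0 + f i1 + f i2.
Proof.
rewrite !big_ord_recl big_ord0 addr0 addrA.
by congr (_ + _ + _); congr f; apply/val_inj.
Qed.

Lemma sum_ord4 (V : nmodType) (f : 'I_4 -> V) :
  \sum_(x < 4) f x = f j0 + f j1 + f j2 + f j3.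
Proof.
rewrite !big_ord_recl big_ord0 addr0 !addrA.
by congr (_ + _ + _ + _); congr f; apply/val_inj.
Qed.

Definition pt (T : Type) (a b c : T) : 'I_3 -> T :=
  fun k => match nat_of_ord k with 0 => a | 1 => b | _ => c end.

Lemma pt0 T (a b c : T) : pt a b c i0 = a. Proof. by []. Qed.
Lemma pt1 T (a b c : T) : pt a b c i1 = b. Proof. by []. Qed.
Lemma pt2 T (a b c : T) : pt a b c i2 = c. Proof. by []. Qed.
Definition ptE := (pt0, pt1, pt2).

Lemma free3_of_unique_relation (K : fieldType) (V : vectType K)
    (r : 'I_4 -> V) (s : 'I_4 -> K) :
  (forall x, s x != 0) ->
  (forall k : 'I_4 -> K, \sum_x k x *: r x = 0 -> exists t, forall x, k x = t * s x) ->
  forall i j l, i != j -> j != l -> i != l -> free [:: r i; r j; r l].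
Proof.
move=> s_neq0 rel i j l ij jl il.
have [x xNijl] : exists x : 'I_4, x \notin [:: i; j; l].
  apply/existsP; rewrite -negb_forall; apply/negP => /forallP ijl_full.
  have := card_size [:: i; j; l].
  by rewrite (@eq_card _ _ predT) ?card_ord // => y; rewrite inE; apply/negPn.
apply/(@freeP K V 3 [tuple r i; r j; r l]) => c rel_c.
pose k y := (y == i)%:R * c i0 + (y == j)%:R * c i1 + (y == l)%:R * c i2.
have sum_pick y (a : K) : \sum_z ((z == y)%:R * a) *: r z = a *: r y.
  rewrite (bigD1 y) //= eqxx mul1r big1 ?addr0 // => z /negbTE ->.
  by rewrite mul0r scale0r.
have [t kE] : exists t, forall y, k y = t * s y.
  apply: rel; rewrite /k; under eq_bigr do rewrite !scalerDl.
  by rewrite !big_split /= !sum_pick -rel_c sum_ord3.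
have k0 y : k y = 0.
  suff t0 : t = 0 by rewrite kE t0 mul0r.
  move: xNijl (kE x); rewrite !inE /k => /norP[/negbTE-> /norP[/negbTE-> /negbTE->]].
  rewrite !mul0r !addr0 => /esym/eqP; rewrite mulf_eq0 (negbTE (s_neq0 x)) orbF.
  by move/eqP.
have ne (y z : 'I_4) : y != z -> (y == z)%:R = 0 :> K by move/negbTE->.
have ne' (y z : 'I_4) : y != z -> (z == y)%:R = 0 :> K by rewrite eq_sym => /ne.
move=> m; case: (ord3P m) => [->|[->|->]].
- by have := k0 i; rewrite /k eqxx ne ?ne // mul1r !mul0r !addr0.
- by have := k0 j; rewrite /k eqxx ne' ?ne // mul1r !mul0r addr0 add0r.
- by have := k0 l; rewrite /k eqxx ne' ?ne' // mul1r !mul0r !add0r.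
Qed.

Lemma rank1_sym_factor (K : fieldType) n (H : 'M[K]_n) :
  \rank H = 1%N -> (forall i j, H i j = H j i) ->
  exists (a : 'I_n -> K) (b : K),
    [/\ b != 0, exists r, a r != 0 & forall i j, H i j = b * a i * a j].
Proof.
move=> rankH symH.
have [U [W HE]] : exists (U : 'cV[K]_n) (W : 'rV[K]_n), forall i j, H i j = U i 0 * W 0 j.
  have := mulmx_base H; move: (col_base H) (row_base H); rewrite rankH => U W UW.
  by exists U, W => i j; rewrite -UW mxE big_ord1.
have [i [j Hij]] : exists i j, H i j != 0 by apply/matrix0Pn; rewrite -mxrank_eq0 rankH.
have Ui : U i 0 != 0 by apply: contraNneq Hij; rewrite HE => ->; rewrite mul0r.
pose b := W 0 i / U i 0.
have WE k : W 0 k = b * U k 0.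
  by apply: (mulfI Ui); have := symH i k; rewrite !HE /b => ->; field.
exists (fun k => U k 0), b; split.
- by apply: contraNneq Hij => b0; rewrite HE WE b0 mul0r mulr0.
- by exists i.
- by move=> k l; rewrite HE WE; ring.
Qed.

Section LinearForms.
Variable C : numFieldType.
Implicit Types (a p q v x : 'I_3 -> C).

Definition unitv (i : 'I_3) : 'I_3 -> C := fun k => (k == i)%:R.

Definition dot p x : C := p i0 * x i0 + p i1 * x i1 + p i2 * x i2.

Lemma dotC p x : dot p x = dot x p.
Proof. by rewrite /dot; ring. Qed.

Lemma dot_scalel (s : C) p x : dot (fun k => s * p k) x = s * dot p x.
Proof. by rewrite /dot; ring. Qed.

Lemma dot_comb2 p x y (s t : C) :
  dot p (fun k => s * x k + t * y k) = s * dot p x + t * dot p y.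
Proof. by rewrite /dot; ring. Qed.

Lemma dot0r p : dot p (fun _ => 0) = 0.
Proof. by rewrite /dot; ring. Qed.

Lemma dot_unitv p (i : 'I_3) : dot p (unitv i) = p i.
Proof. by rewrite /dot /unitv; case: (ord3P i) => [->|[->|->]] /=; ring. Qed.

Definition lc3 (s0 : C) p0 (s1 : C) p1 (s2 : C) p2 : 'I_3 -> C :=
  fun k => s0 * p0 k + s1 * p1 k + s2 * p2 k.

Lemma dot_lc3l s0 p0 s1 p1 s2 p2 x :
  dot (lc3 s0 p0 s1 p1 s2 p2) x = s0 * dot p0 x + s1 * dot p1 x + s2 * dot p2 x.
Proof. by rewrite /dot /lc3; ring. Qed.

Lemma dot_lc3r s0 p0 s1 p1 s2 p2 x :
  dot x (lc3 s0 p0 s1 p1 s2 p2) = s0 * dot x p0 + s1 * dot x p1 + s2 * dot x p2.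
Proof. by rewrite /dot /lc3; ring. Qed.

Definition lin p : {mpoly C[3]} := p i0 *: 'X_i0 + p i1 *: 'X_i1 + p i2 *: 'X_i2.

Lemma lin_eval p x : (lin p).@[x] = dot p x.
Proof. by rewrite /lin !(mevalD, mevalZ) !mevalXU. Qed.

Lemma mderivXU n (i j : 'I_n) : ('X_j : {mpoly C[n]})^`M(i) = (i == j)%:R%:MP.
Proof.
rewrite mderivX mnm1E eq_sym; case: eqP => [->|_]; last by rewrite scale0r.
suff -> : (U_(j) - U_(j))%MM = 0%MM by rewrite mpolyX0 scale1r.
by apply/mnmP => k; rewrite mnmBE mnm0E subnn.
Qed.

Lemma mpolyX_homog (i : 'I_3) : ('X_i : {mpoly C[3]}) \is 1.-homog.
Proof. by rewrite dhomogX; apply/eqP; apply: mdeg1. Qed.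

Lemma lin_homog p : lin p \is 1.-homog.
Proof. by rewrite /lin !(dhomogD, dhomogZ) // mpolyX_homog. Qed.

Lemma lin_pow_homog p k : lin p ^+ k \is k.-homog.
Proof. by have := dhomogMn k (lin_homog p); rewrite mul1n. Qed.

Lemma lin_lc3 s0 p0 s1 p1 s2 p2 :
  lin (lc3 s0 p0 s1 p1 s2 p2) = s0 *: lin p0 + s1 *: lin p1 + s2 *: lin p2.
Proof. by rewrite /lin /lc3 -!mul_mpolyC !mpolyCD !mpolyCM; ring. Qed.

Lemma linform_eval (r : 'rV[C]_3) x : (linform r).@[x] = dot (fun k => r 0 k) x.
Proof.
rewrite /linform raddf_sum /= sum_ord3 /dot.
by rewrite !mevalZ !mevalXU.
Qed.

Definition dual_bases (u w : 'I_3 -> 'I_3 -> C) : Prop :=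
  forall i j, dot (u i) (w j) = (i == j)%:R.

Lemma dual_bases_expand u w : dual_bases u w ->
  forall x k, x k = dot (u i0) x * w i0 k + dot (u i1) x * w i1 k + dot (u i2) x * w i2 k.
Proof.
move=> uw x k.
pose U : 'M[C]_3 := \matrix_(i, l) u i l.
pose W : 'M[C]_3 := \matrix_(i, l) w i l.
have /mulmx1C WU : U *m W^T = 1%:M.
  by apply/matrixP => i j; rewrite !mxE sum_ord3 /U /W !mxE -uw.
have := congr1 (fun M => (M *m \col_l x l) k 0) WU.
rewrite mul1mx -mulmxA mxE sum_ord3 /W !mxE => <-.
by rewrite !sum_ord3 /U !mxE /dot; ring.
Qed.

Definition cross p q : 'I_3 -> C :=
  pt (p i1 * q i2 - p i2 * q i1) (p i2 * q i0 - p i0 * q i2) (p i0 * q i1 - p i1 * q i0).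

Definition det3 p q (r : 'I_3 -> C) : C := dot p (cross q r).

Lemma dot_crossl p q : dot (cross p q) p = 0.
Proof. by rewrite /dot /cross !ptE; ring. Qed.

Lemma dot_crossr p q : dot (cross p q) q = 0.
Proof. by rewrite /dot /cross !ptE; ring. Qed.

Lemma dot_cross p q (r : 'I_3 -> C) : dot (cross p q) r = det3 r p q.
Proof. by rewrite /det3 /dot /cross !ptE; ring. Qed.

Lemma det3_rot p q (r : 'I_3 -> C) : det3 p q r = det3 q r p.
Proof. by rewrite /det3 /dot /cross !ptE; ring. Qed.

Lemma det3_cross p q x y : det3 (cross p q) x y = dot p x * dot q y - dot p y * dot q x.
Proof. by rewrite /det3 /dot /cross !ptE; ring. Qed.

Lemma complete_basis a v (r : 'I_3) : a r != 0 -> (exists k, v k != 0) -> dot a v = 0 ->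
  exists q1 q2, [/\ dot a q1 = 1, dot a q2 = 0 & det3 q2 q1 v != 0].
Proof.
move=> ar [k vk] av.
have aq1 : dot a (fun j => (a r)^-1 * unitv r j) = 1.
  by rewrite dotC dot_scalel dotC dot_unitv mulVf.
exists (fun j => (a r)^-1 * unitv r j), (cross a (unitv k)); split => //.
  by rewrite dotC dot_crossl.
by rewrite det3_cross aq1 av mul0r subr0 mul1r dotC dot_unitv.
Qed.

Lemma dual_basis_through a v : (exists r, a r != 0) -> (exists k, v k != 0) ->
  dot a v = 0 -> exists u w, [/\ dual_bases u w, u i1 = a & w i2 = v].
Proof.
move=> [r ar] v_neq0 av.
have [q1 [q2 [aq1 aq2 D_neq0]]] := complete_basis ar v_neq0 av.
set D := det3 q2 q1 v in D_neq0.
pose u0 := fun k => D^-1 * cross q1 v k.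
pose u2 := fun k => D^-1 * cross q2 q1 k.
exists (pt u0 a u2), (pt q2 q1 v); split => // i j.
case: (ord3P i) => [->|[->|->]]; case: (ord3P j) => [->|[->|->]] /=; rewrite !ptE ?dot_scalel.
all: rewrite ?dot_crossl ?dot_crossr ?mulr0 //.
- by rewrite dot_cross mulVf.
- by rewrite dot_cross det3_rot mulVf.
Qed.

End LinearForms.

Section CubicForms.
Variable C : numFieldType.
Implicit Types (c : nat -> nat -> nat -> C) (x y z v : 'I_3 -> C) (F G : {mpoly C[3]}).

Definition mnm3 (a b d : nat) : 'X_{1..3} := [multinom [tuple a; b; d]].

Lemma mnm3E a b d (k : 'I_3) :
  mnm3 a b d k = if k == i0 then a else if k == i1 then b else d.
Proof. by rewrite mnm_tnth; case: (ord3P k) => [->|[->|->]]. Qed.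

Lemma mnm3_coords (m : 'X_{1..3}) : m = mnm3 (m i0) (m i1) (m i2).
Proof. by apply/mnmP => k; rewrite mnm3E; case: (ord3P k) => [->|[->|->]]. Qed.

Lemma eq_mnm3 (m1 m2 : 'X_{1..3}) :
  (m1 == m2) = [&& m1 i0 == m2 i0, m1 i1 == m2 i1 & m1 i2 == m2 i2].
Proof.
apply/eqP/and3P => [->|[/eqP e0 /eqP e1 /eqP e2]]; first by rewrite !eqxx.
by apply/mnmP => k; case: (ord3P k) => [->|[->|->]].
Qed.

Lemma mdeg3 (m : 'X_{1..3}) : mdeg m = (m i0 + m i1 + m i2)%N.
Proof.
rewrite mdegE !big_ord_recl big_ord0 addn0 addnA.
by congr (_ + _ + _)%N; congr (m _); apply/val_inj.
Qed.

Definition coef3 F : nat -> nat -> nat -> C := fun a b d => F@_(mnm3 a b d).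

Definition cubic c : {mpoly C[3]} :=
  let X0 := 'X_i0 in let X1 := 'X_i1 in let X2 := 'X_i2 in
  c 3 0 0 *: (X0 * X0 * X0) + c 0 3 0 *: (X1 * X1 * X1) + c 0 0 3 *: (X2 * X2 * X2)
+ c 2 1 0 *: (X0 * X0 * X1) + c 2 0 1 *: (X0 * X0 * X2) + c 1 2 0 *: (X0 * X1 * X1)
+ c 0 2 1 *: (X1 * X1 * X2) + c 1 0 2 *: (X0 * X2 * X2) + c 0 1 2 *: (X1 * X2 * X2)
+ c 1 1 1 *: (X0 * X1 * X2).

Definition cubic_fn c x : C :=
  let x0 := x i0 in let x1 := x i1 in let x2 := x i2 in
  c 3 0 0 * (x0 * x0 * x0) + c 0 3 0 * (x1 * x1 * x1) + c 0 0 3 * (x2 * x2 * x2)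
+ c 2 1 0 * (x0 * x0 * x1) + c 2 0 1 * (x0 * x0 * x2) + c 1 2 0 * (x0 * x1 * x1)
+ c 0 2 1 * (x1 * x1 * x2) + c 1 0 2 * (x0 * x2 * x2) + c 0 1 2 * (x1 * x2 * x2)
+ c 1 1 1 * (x0 * x1 * x2).

Lemma cubic_eval c x : (cubic c).@[x] = cubic_fn c x.
Proof. by rewrite /cubic /cubic_fn !(mevalD, mevalZ, mevalM) !mevalXU. Qed.

Lemma eq_cubic_fn c x y : x =1 y -> cubic_fn c x = cubic_fn c y.
Proof. by move=> xy; rewrite /cubic_fn !xy. Qed.

Lemma cubic_homog c : cubic c \is 3.-homog.
Proof.
have X3 (i j k : 'I_3) : ('X_i * 'X_j * 'X_k : {mpoly C[3]}) \is 3.-homog.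
  exact: dhomogM (dhomogM (mpolyX_homog C i) (mpolyX_homog C j)) (mpolyX_homog C k).
by rewrite /cubic /= !(dhomogD, dhomogZ) ?X3.
Qed.

Lemma coef_cubic c m : (cubic c)@_m =
  c 3 0 0 * ((U_(i0) + U_(i0) + U_(i0))%MM == m)%:R
+ c 0 3 0 * ((U_(i1) + U_(i1) + U_(i1))%MM == m)%:R
+ c 0 0 3 * ((U_(i2) + U_(i2) + U_(i2))%MM == m)%:R
+ c 2 1 0 * ((U_(i0) + U_(i0) + U_(i1))%MM == m)%:R
+ c 2 0 1 * ((U_(i0) + U_(i0) + U_(i2))%MM == m)%:R
+ c 1 2 0 * ((U_(i0) + U_(i1) + U_(i1))%MM == m)%:R
+ c 0 2 1 * ((U_(i1) + U_(i1) + U_(i2))%MM == m)%:R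
+ c 1 0 2 * ((U_(i0) + U_(i2) + U_(i2))%MM == m)%:R
+ c 0 1 2 * ((U_(i1) + U_(i2) + U_(i2))%MM == m)%:R
+ c 1 1 1 * ((U_(i0) + U_(i1) + U_(i2))%MM == m)%:R.
Proof. by rewrite /cubic -!mpolyXD !(mcoeffD, mcoeffZ, mcoeffX). Qed.

Lemma homog3_cubicE F : F \is 3.-homog -> F = cubic (coef3 F).
Proof.
move=> homF; apply/mpolyP => m; rewrite coef_cubic.
have [deg3|deg3] := eqVneq (mdeg m) 3%N; last first.
  have U3_neq (i j k : 'I_3) : ((U_(i) + U_(j) + U_(k))%MM == m) = false.
    by apply/negbTE; apply: contra deg3 => /eqP <-; rewrite !mdegD !mdeg1.
  by rewrite !U3_neq (dhomog_nemf_coeff homF deg3) /=; ring.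
rewrite [in LHS](mnm3_coords m) !eq_mnm3 !mnmDE !mnm1E /=.
move: deg3; rewrite mdeg3 /coef3.
by case: (m i0) => [|[|[|[|?]]]]; case: (m i1) => [|[|[|[|?]]]];
  case: (m i2) => [|[|[|[|?]]]] //= _; ring.
Qed.

(* Each coefficient is a fixed combination of values at points with
   coordinates in {-1, 0, 1}. *)
Lemma cubic_eq0 c : (forall x, cubic_fn c x = 0) -> cubic c = 0.
Proof.
move=> c0; have v0 a b d : cubic_fn c (pt a b d) = 0 := c0 _.
have e300 : c 3 0 0 = 0 by rewrite -(v0 1 0 0) /cubic_fn /= !ptE; ring.
have e030 : c 0 3 0 = 0 by rewrite -(v0 0 1 0) /cubic_fn /= !ptE; ring.
have e003 : c 0 0 3 = 0 by rewrite -(v0 0 0 1) /cubic_fn /= !ptE; ring.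
have e210 : c 2 1 0 = 0.
  have -> : c 2 1 0 = (cubic_fn c (pt 1 1 0) - cubic_fn c (pt 1 (-1) 0)) / 2%:R
                      - cubic_fn c (pt 0 1 0) by rewrite /cubic_fn /= !ptE; field.
  by rewrite !v0; ring.
have e120 : c 1 2 0 = 0.
  have -> : c 1 2 0 = (cubic_fn c (pt 1 1 0) + cubic_fn c (pt 1 (-1) 0)) / 2%:R
                      - cubic_fn c (pt 1 0 0) by rewrite /cubic_fn /= !ptE; field.
  by rewrite !v0; ring.
have e201 : c 2 0 1 = 0.
  have -> : c 2 0 1 = (cubic_fn c (pt 1 0 1) - cubic_fn c (pt 1 0 (-1))) / 2%:R
                      - cubic_fn c (pt 0 0 1) by rewrite /cubic_fn /= !ptE; field.
  by rewrite !v0; ring.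
have e102 : c 1 0 2 = 0.
  have -> : c 1 0 2 = (cubic_fn c (pt 1 0 1) + cubic_fn c (pt 1 0 (-1))) / 2%:R
                      - cubic_fn c (pt 1 0 0) by rewrite /cubic_fn /= !ptE; field.
  by rewrite !v0; ring.
have e021 : c 0 2 1 = 0.
  have -> : c 0 2 1 = (cubic_fn c (pt 0 1 1) - cubic_fn c (pt 0 1 (-1))) / 2%:R
                      - cubic_fn c (pt 0 0 1) by rewrite /cubic_fn /= !ptE; field.
  by rewrite !v0; ring.
have e012 : c 0 1 2 = 0.
  have -> : c 0 1 2 = (cubic_fn c (pt 0 1 1) + cubic_fn c (pt 0 1 (-1))) / 2%:R
                      - cubic_fn c (pt 0 1 0) by rewrite /cubic_fn /= !ptE; field.
  by rewrite !v0; ring.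
have e111 : c 1 1 1 = 0.
  rewrite -(v0 1 1 1) /cubic_fn /= !ptE.
  by rewrite e300 e030 e003 e210 e120 e201 e102 e021 e012; ring.
by rewrite /cubic /= e300 e030 e003 e210 e120 e201 e102 e021 e012 e111 !scale0r !addr0.
Qed.

Lemma homog3_eval_inj F G : F \is 3.-homog -> G \is 3.-homog ->
  (forall x, F.@[x] = G.@[x]) -> F = G.
Proof.
move=> homF homG FG; apply/eqP; rewrite -subr_eq0; apply/eqP.
have homFG : F - G \is 3.-homog by rewrite rpredB.
rewrite (homog3_cubicE homFG); apply: cubic_eq0 => x.
by rewrite -cubic_eval -(homog3_cubicE homFG) mevalB FG subrr.
Qed.

Definition polar c x y z : C :=
  let x0 := x i0 in let x1 := x i1 in let x2 := x i2 in
  let y0 := y i0 in let y1 := y i1 in let y2 := y i2 in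
  let z0 := z i0 in let z1 := z i1 in let z2 := z i2 in
  6%:R * (c 3 0 0 * (x0*y0*z0) + c 0 3 0 * (x1*y1*z1) + c 0 0 3 * (x2*y2*z2))
+ 2%:R * (c 2 1 0 * (x0*y0*z1 + x0*y1*z0 + x1*y0*z0)
        + c 2 0 1 * (x0*y0*z2 + x0*y2*z0 + x2*y0*z0)
        + c 1 2 0 * (x0*y1*z1 + x1*y0*z1 + x1*y1*z0)
        + c 0 2 1 * (x1*y1*z2 + x1*y2*z1 + x2*y1*z1)
        + c 1 0 2 * (x0*y2*z2 + x2*y0*z2 + x2*y2*z0)
        + c 0 1 2 * (x1*y2*z2 + x2*y1*z2 + x2*y2*z1))
+ c 1 1 1 * (x0*y1*z2 + x0*y2*z1 + x1*y0*z2 + x1*y2*z0 + x2*y0*z1 + x2*y1*z0).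

Lemma polar_diag c x : polar c x x x = 6%:R * cubic_fn c x.
Proof. by rewrite /polar /cubic_fn; ring. Qed.

Lemma polar_sym12 c x y z : polar c x y z = polar c y x z.
Proof. by rewrite /polar; ring. Qed.

Lemma polar_expand1 c x y z : polar c x y z =
  x i0 * polar c (unitv C i0) y z + x i1 * polar c (unitv C i1) y z
  + x i2 * polar c (unitv C i2) y z.
Proof. by rewrite /polar /unitv /=; ring. Qed.

Lemma cubic_fn_line c y v (s : C) :
  6%:R * cubic_fn c (fun k => y k + s * v k) = polar c y y y + 3%:R * s * polar c y y v
    + 3%:R * s ^+ 2 * polar c y v v + s ^+ 3 * polar c v v v.
Proof. by rewrite /cubic_fn /polar; ring. Qed.

Lemma cubic_fn_plane c y z (s t : C) :
  6%:R * cubic_fn c (fun k => s * y k + t * z k) = s ^+ 3 * polar c y y y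
    + 3%:R * s ^+ 2 * t * polar c y y z + 3%:R * s * t ^+ 2 * polar c y z z
    + t ^+ 3 * polar c z z z.
Proof. by rewrite /cubic_fn /polar; ring. Qed.

Lemma cubic_grad c v (i : 'I_3) :
  2%:R * ((cubic c)^`M(i)).@[v] = polar c (unitv C i) v v.
Proof.
rewrite /cubic /= !(mderivD, mderivZ, mderivM, mderivXU).
rewrite !(mevalD, mevalZ, mevalM, mevalXU, mevalC) /polar /unitv.
by case: (ord3P i) => [->|[->|->]] /=; ring.
Qed.

Lemma cubic_hessian c v (i j : 'I_3) :
  hessian (cubic c) v i j = polar c (unitv C i) (unitv C j) v.
Proof.
rewrite mxE /cubic /= !(mderivD, mderivZ, mderivM, mderivXU, mderivC).
rewrite !(mevalD, mevalZ, mevalM, mevalXU, mevalC, meval0) /polar /unitv.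
by case: (ord3P i) => [->|[->|->]]; case: (ord3P j) => [->|[->|->]] /=; ring.
Qed.

End CubicForms.

Section Apolarity.
Variable C : numFieldType.
Implicit Types (p : 'I_3 -> C) (g F : {mpoly C[3]}).

Lemma mderiv_lin p (i : 'I_3) : (lin p)^`M(i) = (p i)%:MP.
Proof.
rewrite /lin !(mderivD, mderivZ, mderivXU) -!mul_mpolyC.
by case: (ord3P i) => [->|[->|->]] /=; ring.
Qed.

Lemma mderiv_lin_pow p k (i : 'I_3) :
  (lin p ^+ k)^`M(i) = (k%:R * p i) *: lin p ^+ k.-1.
Proof.
elim: k => [|k IHk]; first by rewrite expr0 -mpolyC1 mderivC mul0r scale0r.
rewrite exprS mderivM IHk mderiv_lin /=.
case: k {IHk} => [|k]; first by rewrite !expr0 mul0r scale0r mulr0 addr0 -mul_mpolyC; ring.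
by rewrite -!mul_mpolyC exprS; ring.
Qed.

Lemma mderivm_lin_pow p k (m : 'X_{1..3}) :
  (lin p ^+ k)^`M[m] = ((k ^_ mdeg m)%:R * \prod_(i < 3) p i ^+ m i) *: lin p ^+ (k - mdeg m).
Proof.
move: {2}(mdeg m) (erefl (mdeg m)) => d; elim: d m => [|d IHd] m degm.
  have -> : m = 0%MM by apply/eqP; rewrite -mdeg_eq0 degm.
  rewrite mderivm0m mdeg0 ffactn0 subn0 big1 ?mulr1 ?scale1r // => i _.
  by rewrite mnm0E expr0.
have [i mi_gt0] : exists i : 'I_3, (0 < m i)%N.
  apply/existsP; apply: contra_eqT degm => /existsPn m0.
  by rewrite mdegE big1 // => j _; apply/eqP; rewrite -leqn0 leqNgt m0.
set m' := (m - U_(i))%MM.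
have mE : m = (m' + U_(i))%MM.
  apply/mnmP => j; rewrite mnmDE mnmBE mnm1E.
  by case: (eqVneq i j) => [<-|_] /=; [rewrite addn1 subn1 prednK | rewrite subn0 addn0].
have degm' : mdeg m' = d by move: degm; rewrite mE mdegD mdeg1 addn1 => -[].
rewrite mE mderivmDm mderivmU1m IHd // mderivZ mderiv_lin_pow scalerA mdegD mdeg1.
rewrite degm' addn1 subnS; congr (_ *: _).
have -> : \prod_(j < 3) p j ^+ (m' + U_(i))%MM j = \prod_(j < 3) p j ^+ m' j * p i.
  rewrite (eq_bigr (fun j => p j ^+ m' j * p j ^+ (i == j))); last first.
    by move=> j _; rewrite mnmDE mnm1E exprD.
  rewrite big_split /=; congr (_ * _); rewrite (bigD1 i) //= eqxx expr1 big1 ?mulr1 //.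
  by move=> j /negbTE; rewrite eq_sym => ->; rewrite expr0.
by rewrite ffactnSr natrM; ring.
Qed.

Lemma apolar_actD g F1 F2 :
  apolar_act g (F1 + F2) = apolar_act g F1 + apolar_act g F2.
Proof.
by rewrite /apolar_act -big_split; apply: eq_bigr => m _; rewrite mderivmD scalerDr.
Qed.

Lemma apolar_actZ g (a : C) F : apolar_act g (a *: F) = a *: apolar_act g F.
Proof.
rewrite /apolar_act scaler_sumr; apply: eq_bigr => m _.
by rewrite mderivmZ !scalerA mulrC.
Qed.

Lemma apolar_actB g F1 F2 :
  apolar_act g (F1 - F2) = apolar_act g F1 - apolar_act g F2.
Proof. by rewrite -scaleN1r apolar_actD apolar_actZ scaleN1r. Qed.

(* The sum is the value at p of the degree-e component of g, that is, the
   e-th coefficient of the univariate polynomial t |-> g(t p). *)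
Lemma homog_parts_vanish_on_line g p :
  (forall t : C, g.@[fun i => t * p i] = 0) ->
  forall e, \sum_(m <- msupp g) g@_m * \prod_(i < 3) p i ^+ m i * (e == mdeg m)%:R = 0.
Proof.
move=> g_line0 e.
pose q : {poly C} := \sum_(m <- msupp g) (g@_m * \prod_(i < 3) p i ^+ m i) *: 'X^(mdeg m).
have qE t : q.[t] = g.@[fun i => t * p i].
  rewrite horner_sum mevalE; apply: eq_bigr => m _.
  rewrite hornerZ hornerXn -mulrA; congr (_ * _).
  transitivity (\prod_(i < 3) (t ^+ m i * p i ^+ m i)).
    by rewrite big_split /= prodrXr mdegE mulrC.
  by apply: eq_bigr => i _; rewrite exprMn.
have q0 : q = 0.
  apply: (@roots_geq_poly_eq0 _ q [seq i%:R | i <- iota 0 (size q)]).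
  - by apply/allP => _ /mapP[i _ ->]; rewrite /root qE g_line0.
  - by rewrite map_inj_uniq ?iota_uniq // => i j /eqP; rewrite eqr_nat => /eqP.
  - by rewrite size_map size_iota.
have := congr1 (fun r : {poly C} => r`_e) q0; rewrite coef0 coef_sum => qe.
by apply: etrans _ qe; apply: eq_bigr => m _; rewrite coefZ coefXn.
Qed.

(* By mderivm_lin_pow, g acting on (lin p)^k is the sum over e of the value at
   p of the degree-e component of g, times k^_e (lin p)^(k - e). *)
Lemma apolar_lin_pow_eq0 g p k :
  (forall t : C, g.@[fun i => t * p i] = 0) -> apolar_act g (lin p ^+ k) = 0.
Proof.
move=> /homog_parts_vanish_on_line parts0.
pose H d := (k ^_ d)%:R *: lin p ^+ (k - d).
have H_split d : H d = \sum_(e < k.+1) (e == d :> nat)%:R *: H e.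
  have [kd | dk] := ltnP k d.
    rewrite /H ffact_small // scale0r big1 // => e _.
    by rewrite ltn_eqF ?scale0r // (leq_trans (ltn_ord e) kd).
  rewrite (bigD1 (Ordinal (dk : (d < k.+1)%N))) //= eqxx scale1r big1 ?addr0 // => e.
  by rewrite -val_eqE /= => /negbTE ->; rewrite scale0r.
rewrite /apolar_act.
rewrite (eq_bigr (fun m => (g@_m * \prod_(i < 3) p i ^+ m i) *: H (mdeg m))) => [|m _].
  under eq_bigr do rewrite H_split scaler_sumr.
  rewrite exchange_big big1 //= => e _.
  under eq_bigr do rewrite scalerA.
  by rewrite -scaler_suml parts0 scale0r.
by rewrite mderivm_lin_pow /H !scalerA; congr (_ *: _); ring.
Qed.

End Apolarity.

Section NormalForm.
Variable C : numFieldType.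
Implicit Types (c : nat -> nat -> nat -> C) (u w : 'I_3 -> 'I_3 -> C).

Definition cusp_form u (K0 K1 K2 K3 h : C) : {mpoly C[3]} :=
  K0 *: lin (u i0) ^+ 3 + K1 *: (lin (u i0) ^+ 2 * lin (u i1))
  + K2 *: (lin (u i0) * lin (u i1) ^+ 2) + K3 *: lin (u i1) ^+ 3
  + h *: (lin (u i2) * lin (u i1) ^+ 2).

Definition normal_form u (k : C) : {mpoly C[3]} :=
  k *: lin (u i0) ^+ 3 + lin (u i1) ^+ 2 * lin (u i2).

Lemma cusp_form_eval u K0 K1 K2 K3 h x :
  (cusp_form u K0 K1 K2 K3 h).@[x] =
  K0 * dot (u i0) x ^+ 3 + K1 * (dot (u i0) x ^+ 2 * dot (u i1) x)
  + K2 * (dot (u i0) x * dot (u i1) x ^+ 2) + K3 * dot (u i1) x ^+ 3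
  + h * (dot (u i2) x * dot (u i1) x ^+ 2).
Proof.
by rewrite /cusp_form 4!mevalD 5!mevalZ !mevalM !lin_eval; ring.
Qed.

Lemma normal_form_eval u k x :
  (normal_form u k).@[x] = k * dot (u i0) x ^+ 3 + dot (u i1) x ^+ 2 * dot (u i2) x.
Proof. by rewrite /normal_form mevalD mevalZ !mevalM !lin_eval; ring. Qed.

Lemma cusp_form_homog u K0 K1 K2 K3 h : cusp_form u K0 K1 K2 K3 h \is 3.-homog.
Proof.
by rewrite /cusp_form !rpredD ?rpredZ ?lin_pow_homog //;
  [exact: dhomogM (lin_pow_homog _ 2) (lin_pow_homog _ 1)
  | exact: dhomogM (lin_pow_homog _ 1) (lin_pow_homog _ 2)
  | exact: dhomogM (lin_pow_homog _ 1) (lin_pow_homog _ 2)].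
Qed.

Lemma normal_form_homog u k : normal_form u k \is 3.-homog.
Proof.
rewrite /normal_form rpredD ?rpredZ ?lin_pow_homog //.
exact: dhomogM (lin_pow_homog _ 2) (lin_pow_homog _ 1).
Qed.

Lemma polar_rank1 c v a (b : C) :
  (forall i j, polar c (unitv C i) (unitv C j) v = b * a i * a j) ->
  forall i y, polar c (unitv C i) y v = b * a i * dot a y.
Proof. by move=> hess i y; rewrite polar_sym12 polar_expand1 !hess /dot; ring. Qed.

Lemma cubic_fn_cusp c v a (b : C) :
  (forall i, polar c (unitv C i) v v = 0) ->
  (forall i j, polar c (unitv C i) (unitv C j) v = b * a i * a j) ->
  forall y (s : C),
    cubic_fn c (fun k => y k + s * v k) = cubic_fn c y + s * (b / 2%:R) * dot a y ^+ 2.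
Proof.
move=> grad0 hess y s; apply: (@mulfI _ 6%:R); first by rewrite pnatr_eq0.
have yyv : polar c y y v = b * dot a y ^+ 2.
  by rewrite polar_expand1 !(polar_rank1 hess) /dot; ring.
have yvv : polar c y v v = 0 by rewrite polar_expand1 !grad0; ring.
have vvv : polar c v v v = 0 by rewrite polar_expand1 !grad0; ring.
by rewrite cubic_fn_line yyv yvv vvv polar_diag; field.
Qed.

(* In coordinates y dual to a basis (w0, w1, v), the coefficients of y2^3, y2^2
   and y2 in F come from F(v), the gradient at v (both zero) and the Hessian
   b a a^T at v; as a = y1, only the term (b/2) y2 y1^2 survives. *)
Lemma cusp_coordinates c v a (b : C) :
  (exists k, v k != 0) -> (forall i, ((cubic c)^`M(i)).@[v] = 0) ->
  b != 0 -> (exists r, a r != 0) ->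
  (forall i j, hessian (cubic c) v i j = b * a i * a j) ->
  exists u w, dual_bases u w /\
    exists K0 K1 K2 K3 h, h != 0 /\ cubic c = cusp_form u K0 K1 K2 K3 h.
Proof.
move=> v_neq0 grad0 b_neq0 [r ar] hess.
have gradP i : polar c (unitv C i) v v = 0 by rewrite -cubic_grad grad0 mulr0.
have hessP i j : polar c (unitv C i) (unitv C j) v = b * a i * a j.
  by rewrite -cubic_hessian hess.
have av : dot a v = 0.
  have := polar_rank1 hessP r v; rewrite gradP => /esym/eqP.
  by rewrite !mulf_eq0 (negbTE b_neq0) (negbTE ar) => /eqP.
have [u [w [uw ua wv]]] := dual_basis_through (ex_intro _ r ar) v_neq0 av.
exists u, w; split => //.
pose T := polar c.
exists (T (w i0) (w i0) (w i0) / 6%:R), (T (w i0) (w i0) (w i1) / 2%:R),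
  (T (w i0) (w i1) (w i1) / 2%:R), (T (w i1) (w i1) (w i1) / 6%:R), (b / 2%:R).
split; first by rewrite mulf_neq0 // invr_eq0 pnatr_eq0.
apply: homog3_eval_inj => [||x]; [exact: cubic_homog | exact: cusp_form_homog |].
rewrite cubic_eval cusp_form_eval (eq_cubic_fn c (dual_bases_expand uw x)) wv.
rewrite (cubic_fn_cusp gradP hessP) dot_comb2 -ua !uw /=.
apply: (@mulfI _ 6%:R); first by rewrite pnatr_eq0.
by rewrite mulrDr cubic_fn_plane /T; field.
Qed.

Lemma cusp_form_lead_neq0 u w K0 K1 K2 K3 h : dual_bases u w -> h != 0 ->
  mirreducible (cusp_form u K0 K1 K2 K3 h) -> K0 != 0.
Proof.
move=> uw h_neq0 [_ irr]; apply/eqP => K00.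
pose Q := K1 *: lin (u i0) ^+ 2 + K2 *: (lin (u i0) * lin (u i1))
          + K3 *: lin (u i1) ^+ 2 + h *: (lin (u i2) * lin (u i1)).
have FQ : cusp_form u K0 K1 K2 K3 h = lin (u i1) * Q.
  by rewrite /cusp_form /Q K00 scale0r add0r -!mul_mpolyC; ring.
have const_eval (G : {mpoly C[3]}) x : (msize G <= 1)%N -> G.@[x] = G.@[fun _ => 0].
  by move=> /msize1_polyC ->; rewrite !mevalC.
case: (irr _ _ FQ) => /const_eval G_const.
  by move: (G_const (w i1)); rewrite !lin_eval uw dot0r /= => /eqP; rewrite oner_eq0.
have Q1 := G_const (w i1); have Q12 := G_const (lc3 0 (w i0) 1 (w i1) 1 (w i2)).
rewrite /Q !mevalD !mevalZ !mevalM !lin_eval ?dot_lc3r !dot0r !uw /= in Q1 Q12.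
rewrite !(mul0r, mulr0, mul1r, mulr1, add0r, addr0) in Q1 Q12.
by move: Q12; rewrite Q1 add0r => /eqP; rewrite (negbTE h_neq0).
Qed.

Definition cube_forms u (al ga de h : C) : 'I_3 -> 'I_3 -> C :=
  pt (lc3 1 (u i0) al (u i1) 0 (u i2)) (lc3 0 (u i0) 1 (u i1) 0 (u i2))
     (lc3 ga (u i0) de (u i1) h (u i2)).

Definition cube_basis w (al ga de h : C) : 'I_3 -> 'I_3 -> C :=
  pt (lc3 1 (w i0) 0 (w i1) (- ga / h) (w i2))
     (lc3 (- al) (w i0) 1 (w i1) ((al * ga - de) / h) (w i2))
     (lc3 0 (w i0) 0 (w i1) h^-1 (w i2)).

Lemma dual_cube_bases u w (al ga de h : C) : dual_bases u w -> h != 0 ->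
  dual_bases (cube_forms u al ga de h) (cube_basis w al ga de h).
Proof.
move=> uw h_neq0 i j.
case: (ord3P i) => [->|[->|->]]; case: (ord3P j) => [->|[->|->]];
by rewrite /cube_forms /cube_basis !ptE !dot_lc3l !dot_lc3r !uw /=; field.
Qed.

(* Completing the cube: with al = K1 / 3 K0, the form equals
   K0 (y0 + al y1)^3 + y1^2 (ga y0 + de y1 + h y2). *)
Lemma cusp_form_normal u w K0 K1 K2 K3 h : dual_bases u w -> K0 != 0 -> h != 0 ->
  exists u' w', dual_bases u' w' /\ cusp_form u K0 K1 K2 K3 h = normal_form u' K0.
Proof.
move=> uw K0_neq0 h_neq0.
pose al := K1 / (3%:R * K0).
pose ga := K2 - 3%:R * K0 * al ^+ 2.
pose de := K3 - K0 * al ^+ 3.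
exists (cube_forms u al ga de h), (cube_basis w al ga de h).
split; first exact: dual_cube_bases.
apply: homog3_eval_inj => [||x]; [exact: cusp_form_homog | exact: normal_form_homog |].
by rewrite cusp_form_eval normal_form_eval /cube_forms !ptE !dot_lc3l /de /ga /al; field.
Qed.

End NormalForm.

Section StarConfiguration.
Variable C : numFieldType.
Variables (u w : 'I_3 -> 'I_3 -> C) (k : C).
Hypothesis uw : dual_bases u w.

Definition star_row (x : 'I_4) : 'I_3 -> C :=
  match nat_of_ord x with
  | 0 => lc3 1 (w i0) 0 (w i1) 0 (w i2)
  | 1 => lc3 0 (w i0) 1 (w i1) 0 (w i2)
  | 2 => lc3 0 (w i0) 1 (w i1) (-1) (w i2)
  | _ => lc3 1 (w i0) 1 (w i1) 1 (w i2)
  end.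

Definition star_matrix : 'M[C]_(4, 3) := \matrix_(x, j) star_row x j.

Lemma star_matrix_eval x p : (linform (row x star_matrix)).@[p] = dot (star_row x) p.
Proof. by rewrite linform_eval /dot !mxE. Qed.

(* The rows satisfy r0 + 2 r1 - r2 - r3 = 0; since they span T_1, every
   relation among them is a multiple of this one, which has no zero coefficient. *)
Lemma star_matrix_lines : star_lines star_matrix.
Proof.
pose s (x : 'I_4) : C := match nat_of_ord x with 0 => 1 | 1 => 2%:R | _ => -1 end.
apply: (@free3_of_unique_relation _ _ (fun x => row x star_matrix) s).
  by case=> [[|[|[|[|?]]]] ?]; rewrite /s /= ?oppr_eq0 ?oner_eq0 ?pnatr_eq0.
move=> kk rel.
have rel_u i : kk j0 * dot (u i) (star_row j0) + kk j1 * dot (u i) (star_row j1)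
  + kk j2 * dot (u i) (star_row j2) + kk j3 * dot (u i) (star_row j3) = 0.
  transitivity (dot (u i) (fun j => (\sum_x kk x *: row x star_matrix) 0 j)).
    by rewrite /dot !summxE !sum_ord4 !mxE; ring.
  by rewrite rel /dot !mxE; ring.
have R0 := rel_u i0; have R1 := rel_u i1; have R2 := rel_u i2.
rewrite /star_row /= !dot_lc3r !uw /= in R0 R1 R2.
have lincomb (d c0 c1 c2 l0 l1 l2 : C) :
    l0 = 0 -> l1 = 0 -> l2 = 0 -> d = c0 * l0 + c1 * l1 + c2 * l2 -> d = 0.
  by move=> -> -> -> ->; ring.
exists (kk j0) => x; apply/eqP; rewrite -subr_eq0; apply/eqP.
case: (ord4P x) => ->; rewrite /s /=.
- by apply: (lincomb _ 0 0 0 _ _ _ R0 R1 R2); ring.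
- by apply: (lincomb _ (-2%:R) 1 1 _ _ _ R0 R1 R2); ring.
- by apply: (lincomb _ 1 0 (-1) _ _ _ R0 R1 R2); ring.
- by apply: (lincomb _ 1 0 0 _ _ _ R0 R1 R2); ring.
Qed.

Lemma star_matrix_apolar g : in_star_ideal star_matrix g -> in_perp (normal_form u k) g.
Proof.
move=> Ig.
have cube0 p x y : x != y -> dot p (star_row x) = 0 -> dot p (star_row y) = 0 ->
    apolar_act g (lin p ^+ 3) = 0.
  move=> xy px py; apply: apolar_lin_pow_eq0 => t; apply: Ig; exists x, y.
  by rewrite !star_matrix_eval ![dot (star_row _) _]dotC !dot_scalel px py mulr0.
have P3 : apolar_act g (lin (u i0) ^+ 3) = 0.
  by apply: (cube0 _ j1 j2) => //; rewrite /star_row /= !dot_lc3r !uw /=; ring.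
have M3 : apolar_act g (lin (u i2) ^+ 3) = 0.
  by apply: (cube0 _ j0 j1) => //; rewrite /star_row /= !dot_lc3r !uw /=; ring.
have LpM3 : apolar_act g (lin (lc3 0 (u i0) 1 (u i1) 1 (u i2)) ^+ 3) = 0.
  by apply: (cube0 _ j0 j2) => //; rewrite /star_row /= !dot_lc3l !dot_lc3r !uw /=; ring.
have LmM3 : apolar_act g (lin (lc3 0 (u i0) 1 (u i1) (-1) (u i2)) ^+ 3) = 0.
  by apply: (cube0 _ j0 j3) => //; rewrite /star_row /= !dot_lc3l !dot_lc3r !uw /=; ring.
have e6 : 6%:R *: (lin (u i1) ^+ 2 * lin (u i2)) =
    lin (lc3 0 (u i0) 1 (u i1) 1 (u i2)) ^+ 3
    - lin (lc3 0 (u i0) 1 (u i1) (-1) (u i2)) ^+ 3 - 2%:R *: lin (u i2) ^+ 3.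
  by rewrite !lin_lc3 !scale0r !scale1r !add0r scaleN1r !scaler_nat; ring.
rewrite /in_perp /normal_form apolar_actD apolar_actZ P3 scaler0 add0r.
have : 6%:R *: apolar_act g (lin (u i1) ^+ 2 * lin (u i2)) = 0.
  by rewrite -apolar_actZ e6 !apolar_actB apolar_actZ LpM3 LmM3 M3 scaler0 !subr0.
by move/eqP; rewrite scaler_eq0 pnatr_eq0 /= => /eqP.
Qed.

Lemma normal_form_apolar_star : exists L, apolar_star (normal_form u k) L.
Proof. by exists star_matrix; split; [exact: star_matrix_lines | exact: star_matrix_apolar]. Qed.

End StarConfiguration.

Unset Implicit Arguments.

Theorem proposition4p2 (R : realType) (F : {mpoly (CC R)[3]}) :
  F \is 3.-homog -> cuspidal_cubic F ->
  exists L : 'M[CC R]_(4, 3), apolar_star F L.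
Proof.
move=> homF [_ [irrF [v [[v_neq0 [_ gradF0]] rankH]]]].
have hessian_sym i j : hessian F v i j = hessian F v j i by rewrite !mxE mderiv_comm.
have [a [b [b_neq0 a_neq0 hessF]]] := rank1_sym_factor rankH hessian_sym.
rewrite (homog3_cubicE homF) in irrF gradF0 hessF *.
have [u [w [uw [K0 [K1 [K2 [K3 [h [h_neq0 Fu]]]]]]]]] :=
  cusp_coordinates v_neq0 gradF0 b_neq0 a_neq0 hessF.
rewrite Fu in irrF *.
have K0_neq0 := cusp_form_lead_neq0 uw h_neq0 irrF.
have [u' [w' [uw' ->]]] := cusp_form_normal K1 K2 K3 uw K0_neq0 h_neq0.
exact: normal_form_apolar_star K0 uw'.
Qed.
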